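(* Let $\pi=\langle x,y,t \mid txt^{-1}=xyx^2,\ tyt^{-1}=x^{-1}\rangle$ (the fundamental group of the figure eight knot exterior) and $F=\langle x,y\rangle\le\pi$. Then the set $\{(\operatorname{tr}\rho(x),\operatorname{tr}\rho(y),\operatorname{tr}\rho(xy)) : \rho:\pi\to SL_2(\mathbb{C}) \text{ a homomorphism}\}$ equals $X_0=\{(a,a,\tfrac{a}{a-1}) : a\in\mathbb{C},\ a\neq 1\}$.
   Context: $\operatorname{tr}$ denotes the trace of a $2\times 2$ matrix. $F$ is a free group of rank two on $x,y$. *)

From HB Require Import structures.
From mathcomp Require Import all_boot all_order all_algebra.
Set Implicit Arguments. Unset Strict Implicit. Unset Printing Implicit Defensive.
Import Order.TTheory GRing.Theory Num.Theory.
Local Open Scope ring_scope.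

(* A homomorphism rho : pi -> SL_2(C), where
   pi = < x, y, t | t x t^-1 = x y x^2, t y t^-1 = x^-1 >,
   is (by the universal property of a presentation) the same as a triple
   (X, Y, T) = (rho x, rho y, rho t) of matrices of determinant 1 satisfying
   the two relations. *)
Definition fig8_rep (R : numClosedFieldType) (X Y T : 'M[R]_2) : Prop :=
  [/\ \det X = 1, \det Y = 1, \det T = 1,
      T * X * T^-1 = X * Y * X ^+ 2
    & T * Y * T^-1 = X^-1].

From HB Require Import structures.
From mathcomp Require Import all_boot all_order all_algebra.
From mathcomp Require Import ring.
Set Implicit Arguments. Unset Strict Implicit. Unset Printing Implicit Defensive.
Import Order.TTheory GRing.Theory Num.Theory.
Local Open Scope ring_scope.

(* Conjugation by rho(t) preserves traces.  Writing a = tr X, the relation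
   t y t^-1 = x^-1 gives tr Y = tr X^-1 = a, and t x t^-1 = x y x^2 conjugates
   X Y to X Y X, whose trace is, by Cayley-Hamilton X^2 = a X - 1, equal to
   a tr(X Y) - tr Y; hence tr(X Y) (a - 1) = a.  Conversely, for a != 1 a
   representation is built explicitly: the trivial one for a = 2, a diagonal
   one with fifth roots of unity as eigenvalues when a^2 + a - 1 = 0, and
   otherwise the normal form X = [[a, -1], [1, 0]], Y = [[s, 1], [*, a - s]]
   with s^2 = tr(X Y) - 2, where a conjugating matrix is a solution of a
   linear system, rescaled by a square root of its determinant. *)

Section TwoByTwo.
Variable R : comNzRingType.

Definition mx2 (p q r s : R) : 'M[R]_2 :=
  \matrix_(i, j) if i == 0 then (if j == 0 then p else q)
                 else (if j == 0 then r else s).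

Ltac mx2_entries :=
  apply/matrixP => -[[|[|i]] Hi] [[|[|j]] Hj]; rewrite ?mxE //=.

Lemma mx2_eta (A : 'M[R]_2) : A = mx2 (A 0 0) (A 0 1) (A 1 0) (A 1 1).
Proof. by mx2_entries; congr (A _ _); apply/val_inj. Qed.

Lemma mul_mx2 p q r s p' q' r' s' :
  mx2 p q r s * mx2 p' q' r' s' =
  mx2 (p * p' + q * r') (p * q' + q * s') (r * p' + s * r') (r * q' + s * s').
Proof. by mx2_entries; rewrite !big_ord_recl big_ord0 !mxE /= addr0. Qed.

Lemma scale_mx2 k p q r s : k *: mx2 p q r s = mx2 (k * p) (k * q) (k * r) (k * s).
Proof. by mx2_entries. Qed.

Lemma mxtrace_mx2 p q r s : \tr (mx2 p q r s) = p + s.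
Proof. by rewrite /mxtrace !big_ord_recl big_ord0 !mxE /= addr0. Qed.

Lemma det_mx2 p q r s : \det (mx2 p q r s) = p * s - q * r.
Proof.
rewrite (expand_det_row _ 0) !big_ord_recl big_ord0 /cofactor !det_mx11 !mxE /=.
by rewrite addr0 expr0 expr1 mul1r mulN1r mulrN.
Qed.

Lemma add_mx2 p q r s p' q' r' s' :
  mx2 p q r s + mx2 p' q' r' s' = mx2 (p + p') (q + q') (r + r') (s + s').
Proof. by mx2_entries. Qed.

Lemma opp_mx2 p q r s : - mx2 p q r s = mx2 (- p) (- q) (- r) (- s).
Proof. by mx2_entries. Qed.

Lemma mx2_scalar k : k%:M = mx2 k 0 0 k.
Proof. by mx2_entries. Qed.

Lemma mx2_cayley_hamilton (A : 'M[R]_2) : A ^+ 2 = \tr A *: A - (\det A)%:M.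
Proof.
rewrite [A]mx2_eta mxtrace_mx2 det_mx2 expr2 mul_mx2 scale_mx2.
by mx2_entries; ring.
Qed.

End TwoByTwo.

Section SL2.
Variable R : comUnitRingType.
Implicit Types A M T : 'M[R]_2.

Lemma unitmx_det1 A : \det A = 1 -> A \is a GRing.unit.
Proof. by move=> detA; rewrite unitmxE detA unitr1. Qed.

Lemma invmx_det1 A : \det A = 1 -> A^-1 = (\tr A)%:M - A.
Proof.
move=> detA; rewrite -[LHS]mulr1 -(mulKr (unitmx_det1 detA) ((\tr A)%:M - A)).
congr (_ * _); rewrite mulrBr -expr2 mx2_cayley_hamilton detA.
by rewrite -mulmxE mul_mx_scalar opprB addrC subrK.
Qed.

Lemma mxtrace_inv_det1 A : \det A = 1 -> \tr A^-1 = \tr A.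
Proof.
by move=> detA; rewrite invmx_det1 // raddfB /= mxtrace_scalar mulr2n addrK.
Qed.

Lemma mxtrace_conj T M : T \is a GRing.unit -> \tr (T * M * T^-1) = \tr M.
Proof. by move=> uT; rewrite -mulrA -!mulmxE mxtrace_mulC !mulmxE mulrVK. Qed.

End SL2.

Section Fig8.
Variable R : numClosedFieldType.
Implicit Types X Y T : 'M[R]_2.

Definition fig8_trace_triple (a b c : R) : Prop :=
  exists X Y T : 'M[R]_2, fig8_rep X Y T /\ (a, b, c) = (\tr X, \tr Y, \tr (X * Y)).

Lemma fig8_rep_traces X Y T : fig8_rep X Y T ->
  [/\ \tr X != 1, \tr Y = \tr X & \tr (X * Y) = \tr X / (\tr X - 1)].
Proof.
case=> detX _ detT relX relY; set a := \tr X; set c := \tr (X * Y).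
have uT := unitmx_det1 detT; have uX := unitmx_det1 detX.
have trY : \tr Y = a by rewrite -(mxtrace_conj Y uT) relY mxtrace_inv_det1.
have trXY : c = a * c - a.
  have conjXY : T * (X * Y) * T^-1 = X * Y * X.
    have -> : X * Y * X = X * Y * X ^+ 2 * X^-1 by rewrite expr2 mulrA mulrK.
    by rewrite -relX -relY !mulrA mulrVK.
  rewrite -[LHS](mxtrace_conj _ uT) conjXY -mulmxE mxtrace_mulC !mulmxE mulrA.
  rewrite -expr2 mx2_cayley_hamilton detX mulrBl -scalerAl mul1r raddfB /=.
  by rewrite mxtraceZ trY.
have a_neq1 : a != 1.
  apply/eqP => a1; move/eqP: trXY.
  by rewrite a1 mul1r -subr_eq0 subKr oner_eq0.
have a1_neq0 : a - 1 != 0 by rewrite subr_eq0.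
split=> //; apply: (canRL (mulfK a1_neq0)).
by rewrite -[RHS]addr0 -(subrr c) {2}trXY; ring.
Qed.

Lemma fig8_rep_of_intertwiner X Y S :
    \det X = 1 -> \det Y = 1 -> \det S != 0 ->
    S * X = X * Y * X ^+ 2 * S -> S * Y = X^-1 * S ->
  exists T, fig8_rep X Y T.
Proof.
move=> detX detY detS_neq0 intX intY.
set k := sqrtC (\det S); have k_neq0 : k != 0 by rewrite sqrtC_eq0.
have detT : \det (k^-1 *: S) = 1.
  by rewrite detZ exprVn sqrtCK mulVf.
have uT := unitmx_det1 detT.
exists (k^-1 *: S); split=> //; apply: (canLR (mulrK uT)).
  by rewrite -scalerAl intX scalerAr.
by rewrite -scalerAl intY scalerAr.
Qed.

Lemma fig8_rep_root5 (z : R) : z ^+ 5 = 1 ->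
  exists T, fig8_rep (mx2 z 0 0 (z ^+ 4)) (mx2 z 0 0 (z ^+ 4)) T.
Proof.
move=> z5; set X := mx2 z 0 0 (z ^+ 4).
have detX : \det X = 1 by rewrite det_mx2 -z5; ring.
have invX : X^-1 = mx2 (z ^+ 4) 0 0 z.
  by rewrite invmx_det1 // mxtrace_mx2 mx2_scalar opp_mx2 add_mx2; congr mx2; ring.
have z16 : z ^+ 16 = z.
  by rewrite (_ : 16 = 5 * 3 + 1)%N // exprD exprM z5 expr1n mul1r.
have X4 : X * X * X ^+ 2 = X^-1.
  rewrite expr2 !mul_mx2 invX.
  by congr mx2; [ring | ring | ring | rewrite -[RHS]z16; ring].
have det_swap : \det (mx2 0 1 (-1) 0 : 'M[R]_2) != 0.
  by rewrite det_mx2 mul0r sub0r mul1r opprK oner_eq0.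
apply: (fig8_rep_of_intertwiner (S := mx2 0 1 (-1) 0)) => //;
  rewrite ?X4 invX !mul_mx2; congr mx2; ring.
Qed.

Lemma exists_quadratic_root (p q : R) : exists z : R, z ^+ 2 + p * z + q = 0.
Proof.
set d := sqrtC (p ^+ 2 - 4 * q); have d2 : d ^+ 2 = p ^+ 2 - 4 * q by exact: sqrtCK.
have two_neq0 : (2 : R) != 0 by rewrite pnatr_eq0.
exists ((d - p) / 2).
transitivity ((d ^+ 2 - (p ^+ 2 - 4 * q)) / 4); first by field.
by rewrite d2 subrr mul0r.
Qed.

Lemma fig8_trace_triple_golden (a : R) : a ^+ 2 + a - 1 = 0 ->
  fig8_trace_triple a a (a / (a - 1)).
Proof.
move=> ha; have [z hz] := exists_quadratic_root (- a) 1.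
have z4 : z ^+ 4 = a - z.
  apply: subr0_eq.
  transitivity ((z ^+ 2 + - a * z + 1) * (z ^+ 2 + a * z + a ^+ 2 - 1)
                + (a ^+ 2 + a - 1) * ((a - 1) * z - 1)); first by ring.
  by rewrite hz ha !mul0r addr0.
have z5 : z ^+ 5 = 1.
  apply: subr0_eq.
  transitivity (z * (z ^+ 4 - (a - z)) - (z ^+ 2 + - a * z + 1)); first by ring.
  by rewrite z4 subrr mulr0 hz subrr.
have [T rep] := fig8_rep_root5 z5.
have a1_neq0 : a - 1 != 0.
  apply: contra_eq_neq ha => /eqP; rewrite subr_eq0 => /eqP ->.
  by rewrite expr1n addrK oner_neq0.
exists (mx2 z 0 0 (z ^+ 4)), (mx2 z 0 0 (z ^+ 4)), T; split=> //.
rewrite mul_mx2 !mxtrace_mx2 z4 subrKC; congr (_, _, _).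
apply/esym/(canRL (mulfK a1_neq0))/subr0_eq.
transitivity (2 * (a - 1) * (z ^+ 2 + - a * z + 1) + (a ^+ 2 + a - 1) * (a - 2)).
  by ring.
by rewrite hz ha mulr0 mul0r addr0.
Qed.

Lemma fig8_rep_generic (s a : R) :
    s != 0 -> s ^+ 2 + 1 != 0 -> s ^+ 4 + 5 * s ^+ 2 + 5 != 0 ->
    a * (s ^+ 2 + 1) = s ^+ 2 + 2 ->
  exists T, fig8_rep (mx2 a (-1) 1 0) (mx2 s 1 (s * (a - s) - 1) (a - s)) T.
Proof.
move=> s_neq0 s2_neq0 s4_neq0 /(canRL (mulfK s2_neq0)) ->.
set X := mx2 _ _ _ _; set Y := mx2 _ _ _ _.
have detX : \det X = 1 by rewrite det_mx2; ring.
have detY : \det Y = 1 by rewrite det_mx2; ring.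
(* [S] spans the solutions of the linear system S X = X Y X^2 S, S Y = X^-1 S. *)
pose S := mx2 (-1 + 2 * s - s ^+ 2 + 3 * s ^+ 3 + s ^+ 5)
              (1 + s + 2 * s ^+ 2 + s ^+ 3 + s ^+ 4)
              (-1 + s ^+ 2 + s ^+ 4) (1 + 3 * s + s ^+ 2 + 2 * s ^+ 3).
have detS : \det S = s ^+ 2 * (s ^+ 2 + 1) * (s ^+ 4 + 5 * s ^+ 2 + 5).
  by rewrite det_mx2; ring.
apply: (fig8_rep_of_intertwiner (S := S)) => //.
- by rewrite detS !mulf_neq0 ?expf_neq0.
- by rewrite expr2 !mul_mx2; congr mx2; field.
- rewrite invmx_det1 // mxtrace_mx2 mx2_scalar opp_mx2 add_mx2 !mul_mx2.
  by congr mx2; field.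
Qed.

Lemma fig8_trace_triple_generic (a : R) :
  a != 1 -> a != 2 -> a ^+ 2 + a - 1 != 0 -> fig8_trace_triple a a (a / (a - 1)).
Proof.
move=> a_neq1 a_neq2 ha; have a1_neq0 : a - 1 != 0 by rewrite subr_eq0.
set s := sqrtC ((2 - a) / (a - 1)).
have s2 : s ^+ 2 = (2 - a) / (a - 1) by exact: sqrtCK.
have s_neq0 : s != 0.
  have : s ^+ 2 != 0 by rewrite s2 mulf_neq0 ?invr_eq0 // subr_eq0 eq_sym.
  by rewrite expf_eq0.
have s2p1_neq0 : s ^+ 2 + 1 != 0.
  by rewrite (_ : s ^+ 2 + 1 = (a - 1)^-1) ?invr_eq0 // s2; field.
have s4_neq0 : s ^+ 4 + 5 * s ^+ 2 + 5 != 0.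
  rewrite (_ : s ^+ 4 + _ + _ = (a ^+ 2 + a - 1) / (a - 1) ^+ 2).
    by rewrite mulf_neq0 // invr_eq0 expf_neq0.
  by rewrite (_ : 4 = 2 * 2)%N // exprM s2; field.
have [|T rep] := fig8_rep_generic s_neq0 s2p1_neq0 s4_neq0 (a := a).
  by rewrite s2; field.
exists (mx2 a (-1) 1 0), (mx2 s 1 (s * (a - s) - 1) (a - s)), T; split=> //.
rewrite mul_mx2 !mxtrace_mx2 addr0 subrKC; congr (_, _, _).
apply/esym/(canRL (mulfK a1_neq0))/subr0_eq.
transitivity ((a - 1) * (s ^+ 2 - (2 - a) / (a - 1))); first by field.
by rewrite s2 subrr mulr0.
Qed.

Lemma fig8_trace_triple_trivial : fig8_trace_triple 2 2 (2 / (2 - 1)).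
Proof.
exists 1, 1, 1; split.
  by split; rewrite ?det1 ?invr1 ?expr1n ?mulr1.
by rewrite mulr1 mxtrace1 (_ : 2 - 1 = 1) ?divr1 //; ring.
Qed.

Lemma fig8_trace_triple_realized (a : R) :
  a != 1 -> fig8_trace_triple a a (a / (a - 1)).
Proof.
move=> a_neq1.
have [-> | a_neq2] := eqVneq a 2; first exact: fig8_trace_triple_trivial.
have [golden | ha] := eqVneq (a ^+ 2 + a - 1) 0.
  exact: fig8_trace_triple_golden.
exact: fig8_trace_triple_generic.
Qed.

End Fig8.

Theorem lemma6p2 (R : numClosedFieldType) (a b c : R) :
  (exists X Y T : 'M[R]_2,
      fig8_rep X Y T /\ (a, b, c) = (\tr X, \tr Y, \tr (X * Y)))
  <->
  (exists a0 : R, a0 != 1 /\ (a, b, c) = (a0, a0, a0 / (a0 - 1))).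
Proof.
split=> [[X [Y [T [rep ->]]]] | [a0 [a0_neq1 ->]]].
  by have [a_neq1 -> ->] := fig8_rep_traces rep; exists (\tr X).
exact: fig8_trace_triple_realized.
Qed.
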